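(* Let $R$ be a ring and let $A=\sigma(R)\langle x_1,\dots,x_n\rangle$ be a bijective skew PBW extension of $R$ with associated family $\Sigma$. Suppose $R$ is $\Sigma$-rigid, Abelian and NI. If $R$ is a right (resp. left) p.p.-ring, then $A$ has Property $(a.c.)$ on the right (resp. left).
   Context: All rings are associative with identity. For $S\subseteq T$ (a ring $T$), $r_T(S)=\{a\in T: Sa=0\}$ and $\ell_T(S)=\{a\in T: aS=0\}$. A ring $A$ is a skew PBW extension of $R$, written $A=\sigma(R)\langle x_1,\dots,x_n\rangle$, if: (i) $R$ is a subring of $A$ with the same identity; (ii) there are elements $x_1,\dots,x_n\in A$ such that $A$ is a free left $R$-module with basis the standard monomials $x^\alpha=x_1^{\alpha_1}\cdots x_n^{\alpha_n}$, $\alpha\in\mathbb N^n$ (with $x^0=1$); (iii) for each $i$ and each nonzero $r\in R$ there is nonzero $c_{i,r}\in R$ with $x_ir-c_{i,r}x_i\in R$; (iv) for all $i,j$ there is nonzero $d_{i,j}\in R$ with $x_jx_i-d_{i,j}x_ix_j\in R+Rx_1+\cdots+Rx_n$. For such $A$ there are injective endomorphisms $\sigma_i$ of $R$ and $\sigma_i$-derivations $\delta_i$ of $R$ with $x_ir=\sigma_i(r)x_i+\delta_i(r)$ for all $r\in R$; $\Sigma=\{\sigma_1,\dots,\sigma_n\}$. For $\alpha\in\mathbb N^n$, $\sigma^\alpha=\sigma_1^{\alpha_1}\circ\cdots\circ\sigma_n^{\alpha_n}$. The extension is bijective if each $\sigma_i$ is bijective and each $d_{i,j}$ ($1\le i<j\le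 n$) is invertible. $R$ is $\Sigma$-rigid if for $a\in R$ and $\alpha\in\mathbb N^n$, $a\sigma^\alpha(a)=0$ implies $a=0$. $R$ is Abelian if every idempotent of $R$ is central. $R$ is NI if the upper nilradical $\mathrm{nil}^*(R)$ (sum of all nil ideals) equals the set $\mathrm{nil}(R)$ of nilpotent elements. $R$ is a right (resp. left) p.p.-ring if for each $a\in R$ there is an idempotent $e$ with $r_R(a)=eR$ (resp. $\ell_R(a)=Re$). A ring $T$ has Property $(a.c.)$ on the right if for every finitely generated right ideal $I$ of $T$ there is $c\in T$ with $r_T(I)=r_T(cT)$; on the left if for every finitely generated left ideal $I$ there is $c\in T$ with $\ell_T(I)=\ell_T(Tc)$. *)

From HB Require Import structures.
From mathcomp Require Import all_boot all_order all_algebra.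
Set Implicit Arguments. Unset Strict Implicit. Unset Printing Implicit Defensive.
Import GRing.Theory.
Local Open Scope ring_scope.

Definition expo (n : nat) := {ffun 'I_n -> nat}.

Definition smon (A : pzRingType) (n : nat) (x : 'I_n -> A) (alpha : expo n) : A :=
  \prod_(i < n) x i ^+ alpha i.

(* sigma^alpha = sigma_1^alpha_1 o ... o sigma_n^alpha_n *)
Definition sigma_pow (R : Type) (n : nat) (sigma : 'I_n -> R -> R) (alpha : expo n)
  : R -> R :=
  foldr (fun i f => iter (alpha i) (sigma i) \o f) id (enum 'I_n).

(* A = sigma(R)<x_1,...,x_n> is a skew PBW extension of R, where R is
   identified with its image under the injective unital ring morphism phi. *)
Definition skew_PBW (R A : pzRingType) (phi : {rmorphism R -> A}) (n : nat)
  (x : 'I_n -> A) (d : 'I_n -> 'I_n -> R) : Prop :=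
  [/\ injective phi,
      (forall a : A, exists (s : seq (expo n)) (c : expo n -> R),
          a = \sum_(m <- s) phi (c m) * smon x m),
      (forall (s : seq (expo n)) (c : expo n -> R), uniq s ->
          \sum_(m <- s) phi (c m) * smon x m = 0 -> forall m, m \in s -> c m = 0),
      (forall (i : 'I_n) (r : R), r != 0 ->
          exists2 c : R, c != 0 & exists t : R, x i * phi r - phi c * x i = phi t)
    &
      (forall i j : 'I_n, d i j != 0 /\
          exists (r0 : R) (rs : 'I_n -> R),
            x j * x i - phi (d i j) * x i * x j = phi r0 + \sum_(k < n) phi (rs k) * x k)].

Definition sigma_rigid (R : pzRingType) (n : nat) (sigma : 'I_n -> R -> R) : Prop :=
  forall (a : R) (alpha : expo n), a * sigma_pow sigma alpha a = 0 -> a = 0.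

Definition idempotent_el (R : pzRingType) (e : R) : Prop := e * e = e.

Definition abelian_ring (R : pzRingType) : Prop :=
  forall e : R, idempotent_el e -> forall r : R, e * r = r * e.

Definition nilpotent_el (R : pzRingType) (a : R) : Prop := exists k : nat, a ^+ k = 0.

Definition is_ideal (R : pzRingType) (I : R -> Prop) : Prop :=
  [/\ I 0, (forall a b, I a -> I b -> I (a + b)), (forall a, I a -> I (- a)),
      (forall a r, I a -> I (r * a)) & (forall a r, I a -> I (a * r))].

Definition nil_ideal (R : pzRingType) (I : R -> Prop) : Prop :=
  is_ideal I /\ forall a, I a -> nilpotent_el a.

(* upper nilradical nil^*(R): the sum of all nil ideals (finite sums of
   elements of nil ideals) *)
Definition upper_nilradical (R : pzRingType) (a : R) : Prop :=
  exists s : seq R, (forall b, b \in s -> exists I, nil_ideal I /\ I b) /\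
                    a = \sum_(b <- s) b.

Definition NI_ring (R : pzRingType) : Prop :=
  forall a : R, upper_nilradical a <-> nilpotent_el a.

Definition r_ann (T : pzRingType) (S : T -> Prop) (b : T) : Prop :=
  forall a, S a -> a * b = 0.
Definition l_ann (T : pzRingType) (S : T -> Prop) (b : T) : Prop :=
  forall a, S a -> b * a = 0.

Definition right_pp (R : pzRingType) : Prop :=
  forall a : R, exists e : R, idempotent_el e /\
    forall b, r_ann (fun y => y = a) b <-> exists t, b = e * t.
Definition left_pp (R : pzRingType) : Prop :=
  forall a : R, exists e : R, idempotent_el e /\
    forall b, l_ann (fun y => y = a) b <-> exists t, b = t * e.

Definition rideal_gen (T : pzRingType) (s : seq T) (y : T) : Prop :=
  exists t : 'I_(size s) -> T, y = \sum_(k < size s) s`_k * t k.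
Definition lideal_gen (T : pzRingType) (s : seq T) (y : T) : Prop :=
  exists t : 'I_(size s) -> T, y = \sum_(k < size s) t k * s`_k.

Definition ac_right (T : pzRingType) : Prop :=
  forall s : seq T, exists c : T,
    forall b, r_ann (rideal_gen s) b <-> r_ann (rideal_gen [:: c]) b.
Definition ac_left (T : pzRingType) : Prop :=
  forall s : seq T, exists c : T,
    forall b, l_ann (lideal_gen s) b <-> l_ann (lideal_gen [:: c]) b.

Definition invertible_el (R : pzRingType) (a : R) : Prop :=
  exists u : R, u * a = 1 /\ a * u = 1.

(* Rigidity makes R reduced and Sigma-compatible ([a sigma^alpha(b) = 0] iff [a b = 0]),
   and forces [sigma_i(e) = e], [delta_i(e) = 0] for every idempotent [e]; R being
   Abelian, [e] is then central in A.  With the graded lexicographic order on monomials,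
   the leading coefficient of [f h] is [f_alpha sigma^alpha(h_beta)] times a unit, which
   shows that A is reduced and, using the p.p. idempotents of the coefficients of [f],
   that [r_A(f) = e A] for a central idempotent [e] of R.  In a reduced ring the right
   annihilator of a finitely generated right ideal, and the left annihilator of a finitely
   generated left ideal, are both the common annihilator of the generators, so the
   product [e] of these idempotents over the generators gives [c = 1 - e] on both sides.
   A left p.p. reduced Abelian ring is right p.p., since [l_R(a) = r_R(a)] and [R e = e R]. *)

From mathcomp Require Import all_boot all_order all_algebra.
From mathcomp Require Import zify.
From Stdlib Require Import ClassicalEpsilon.
Set Implicit Arguments. Unset Strict Implicit. Unset Printing Implicit Defensive.
Import Order.TTheory GRing.Theory.

Lemma lexi_addn_cancel (I : eqType) (l : seq I) (a b a0 b0 : I -> nat) :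
  (map a l <= map a0 l :> seqlexi nat)%O -> (map b l <= map b0 l :> seqlexi nat)%O ->
  (forall o, a o + b o = a0 o + b0 o) -> map a l = map a0 l /\ map b l = map b0 l.
Proof.
elim: l => [|o l IH] //= + + ab; rewrite !lexi_cons !leEnat => /andP[ao Ha] /andP[bo Hb].
have ea : a o = a0 o by have := ab o; lia.
have eb : b o = b0 o by have := ab o; lia.
move: Ha Hb; rewrite ea eb !leqnn /= => Ha Hb.
by have [-> ->] := IH Ha Hb ab.
Qed.

Section Exponents.
Variable n : nat.
Implicit Types (a b : expo n) (i j : 'I_n).

Definition ezero : expo n := [ffun _ => 0%N].
Definition eadd a b : expo n := [ffun i => (a i + b i)%N].
Definition eunit j : expo n := [ffun k => nat_of_bool (k == j)].
Definition edeg a : nat := \sum_(i < n) a i.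
Definition expo_upto j a : Prop := forall k : 'I_n, (j < k)%N -> a k = 0%N.

Lemma edeg0 : edeg ezero = 0%N.
Proof. by rewrite /edeg big1 // => i _; rewrite ffunE. Qed.

Lemma edeg_eadd a b : edeg (eadd a b) = (edeg a + edeg b)%N.
Proof. by rewrite /edeg -big_split /=; apply: eq_bigr => i _; rewrite ffunE. Qed.

Lemma edeg_eunit j : edeg (eunit j) = 1%N.
Proof.
rewrite /edeg (bigD1 j) //= ffunE eqxx big1 ?addn0 // => i /negbTE ne.
by rewrite ffunE ne.
Qed.

Lemma edeg_eadd_eunit a j : edeg (eadd a (eunit j)) = (edeg a).+1.
Proof. by rewrite edeg_eadd edeg_eunit addn1. Qed.

Lemma eaddC a b : eadd a b = eadd b a.
Proof. by apply/ffunP => i; rewrite !ffunE addnC. Qed.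

Lemma eaddA a b c : eadd a (eadd b c) = eadd (eadd a b) c.
Proof. by apply/ffunP => i; rewrite !ffunE addnA. Qed.

Lemma eadd0 a : eadd a ezero = a.
Proof. by apply/ffunP => i; rewrite !ffunE addn0. Qed.

Lemma eunit_neq0 j : eunit j != ezero.
Proof. by apply/eqP => /(congr1 (fun f : expo n => f j)); rewrite !ffunE eqxx. Qed.

(* The graded lexicographic order: total degree first, then the exponents of
   x_0, x_1, ... in turn. *)
Definition ekey_val a (o : option 'I_n) : nat :=
  if o is Some i then a i else edeg a.
Definition ekey_index : seq (option 'I_n) := None :: map Some (enum 'I_n).
Definition ekey a : seqlexi nat := map (ekey_val a) ekey_index.
Definition mle a b := (ekey a <= ekey b)%O.
Definition mlt a b := (ekey a < ekey b)%O.

Lemma ekey_inj : injective ekey.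
Proof.
move=> a b /eq_in_map E; apply/ffunP => i; apply: (E (Some i)).
by rewrite inE map_f ?mem_enum ?orbT.
Qed.

Lemma mle_edeg a b : mle a b -> (edeg a <= edeg b)%N.
Proof. by rewrite /mle /ekey /= lexi_cons leEnat => /andP[]. Qed.

Lemma mle_eadd_cancel a b a0 b0 :
  mle a a0 -> mle b b0 -> eadd a b = eadd a0 b0 -> a = a0 /\ b = b0.
Proof.
move=> la lb E; suff [ka kb] : ekey a = ekey a0 /\ ekey b = ekey b0.
  by split; apply: ekey_inj.
apply: lexi_addn_cancel la lb _ => -[i|] /=; last by rewrite -!edeg_eadd E.
by have := congr1 (fun f : expo n => f i) E; rewrite !ffunE.
Qed.

Lemma exists_mle_max (l : seq (expo n)) :
  l != [::] -> exists2 m, m \in l & forall y, y \in l -> mle y m.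
Proof.
elim: l => [|y l IH] // _; have [-> | /IH[m ml Hm]] := eqVneq l [::].
  by exists y; rewrite ?inE // => z; rewrite inE => /eqP ->; rewrite /mle.
have [ym | my] := leP (ekey y) (ekey m).
  exists m; first by rewrite inE ml orbT.
  by move=> z; rewrite inE => /orP[/eqP -> | /Hm].
exists y; first by rewrite inE eqxx.
move=> z; rewrite inE => /orP[/eqP -> | /Hm zm]; first by rewrite /mle.
exact: le_trans zm (ltW my).
Qed.

Lemma expo_upto0 j : expo_upto j ezero.
Proof. by move=> k _; rewrite ffunE. Qed.

Lemma expo_uptoD a i j :
  expo_upto j a -> (i <= j)%N -> expo_upto j (eadd a (eunit i)).
Proof.
move=> Ha ij k jk; rewrite !ffunE Ha //; case: eqP => // ki; subst k.
by move: (leq_trans jk ij); rewrite ltnn.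
Qed.

(* Peel off the variable of largest index occurring in [a]. *)
Lemma expo_split_max a j : (0 < a j)%N ->
  exists j' a', [/\ (j <= j')%N, expo_upto j' a' & a = eadd a' (eunit j')].
Proof.
move=> aj; case: (@arg_maxnP _ j (fun k => 0 < a k)%N (@nat_of_ord n) aj) => j' aj' max_j'.
exists j', [ffun k => (a k - (k == j'))%N]; split; first exact: max_j'.
  move=> k lt; rewrite ffunE; case: (posnP (a k)) => [-> // | ak].
  by have /= := max_j' _ ak; rewrite leqNgt lt.
apply/ffunP => k; rewrite !ffunE; case: eqP => [-> | _] /=; last by rewrite subn0 addn0.
by rewrite subn1 addn1 prednK.
Qed.

Lemma expo_split_last a : a <> ezero ->
  exists j a', expo_upto j a' /\ a = eadd a' (eunit j).
Proof.
move=> ne; have [j aj] : exists j, (0 < a j)%N.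
  apply/existsP; apply: contra_notT ne; rewrite negb_exists => /forallP a0.
  by apply/ffunP => i; rewrite ffunE; apply/eqP; rewrite -leqn0 leqNgt a0.
by have [j' [a' [_ ? ?]]] := expo_split_max aj; exists j', a'.
Qed.

Lemma expo_upto_or_split a i : expo_upto i a \/
  exists j a', [/\ (i < j)%N, expo_upto j a' & a = eadd a' (eunit j)].
Proof.
have [/existsP[k /andP[ik ak]] | none] := boolP [exists k : 'I_n, (i < k)%N && (0 < a k)%N].
  have [j [a' [kj ? ?]]] := expo_split_max ak; right; exists j, a'.
  by split=> //; apply: leq_trans ik kj.
left=> k ik; move: none; rewrite negb_exists => /forallP/(_ k).
by rewrite ik /= lt0n negbK => /eqP.
Qed.

Lemma expo_ind (P : expo n -> Prop) : P ezero ->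
  (forall a j, expo_upto j a -> P a -> P (eadd a (eunit j))) -> forall a, P a.
Proof.
move=> P0 PS a; elim: {a}(edeg a).+1 {-2}a (ltnSn (edeg a)) => // k IH a.
have [-> // | /eqP/expo_split_last[j [a' [a'j ->]]]] := eqVneq a ezero.
by rewrite edeg_eadd_eunit ltnS => /IH; apply: PS.
Qed.

Lemma enum_split j : exists l1 l2, [/\ enum 'I_n = l1 ++ j :: l2,
  forall k, k \in l1 -> (k < j)%N & forall k, k \in l2 -> (j < k)%N].
Proof.
have := mem_enum 'I_n j; rewrite inE => /splitPr E.
have := iota_ltn_sorted 0 n; rewrite -val_enum_ord; move: E => [l1 l2].
rewrite map_cat /= => S; exists l1, l2; split=> // k kl.
  move: S; case/splitPr: kl => p1 p2; rewrite map_cat -catA /= => /cat_sorted2[_].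
  by move=> /(order_path_min ltn_trans)/allP; apply; rewrite mem_cat inE eqxx orbT.
have /(order_path_min ltn_trans)/allP := (cat_sorted2 S).2.
by apply; apply: map_f.
Qed.

End Exponents.

Local Open Scope ring_scope.

Section Annihilators.
Variable T : pzRingType.

Definition reduced_ring := forall a : T, a * a = 0 -> a = 0.

Definition central_idem (e : T) := idempotent_el e /\ forall r, e * r = r * e.

Definition rann_idem (s : seq T) (e : T) :=
  central_idem e /\ forall g, (forall f, f \in s -> f * g = 0) <-> e * g = g.

Definition right_central_pp := forall f : T, exists e, rann_idem [:: f] e.

Lemma mul_eq0_seq1 (f g : T) :
  (forall f', f' \in [:: f] -> f' * g = 0) <-> f * g = 0.
Proof. by split=> [-> // | fg f']; rewrite ?inE // => /eqP ->. Qed.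

Lemma rann_idem_nil : rann_idem [::] 1.
Proof.
split; first by split; [rewrite /idempotent_el mulr1 | move=> r; rewrite mul1r mulr1].
by move=> g; rewrite mul1r.
Qed.

Lemma rann_idem_cons f s e1 e2 :
  rann_idem [:: f] e1 -> rann_idem s e2 -> rann_idem (f :: s) (e1 * e2).
Proof.
move=> [[idem1 C1] E1] [[idem2 C2] E2]; split.
  split=> [|r]; last by rewrite -mulrA C2 !mulrA C1.
  by rewrite /idempotent_el -mulrA (mulrA e2) -C1 -mulrA idem2 mulrA idem1.
move=> g; split=> [ann|fix12].
  rewrite -mulrA; have /E2 -> : forall f', f' \in s -> f' * g = 0.
    by move=> f' f's; apply: ann; rewrite inE f's orbT.
  by apply/E1 => f'; rewrite inE => /eqP ->; apply: ann; rewrite inE eqxx.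
have fix1 : e1 * g = g by rewrite -fix12 !mulrA idem1.
have fix2 : e2 * g = g by rewrite -fix12 !mulrA -C1 -(mulrA e1) idem2.
move=> f'; rewrite inE => /orP[/eqP-> | f's].
  by apply: (proj2 (E1 g) fix1); rewrite inE.
exact: (proj2 (E2 g) fix2).
Qed.

Lemma rann_idem_seq : right_central_pp -> forall s, exists e, rann_idem s e.
Proof.
move=> pp; elim=> [|f s [e2 E2]]; first by exists 1; apply: rann_idem_nil.
by have [e1 E1] := pp f; exists (e1 * e2); apply: rann_idem_cons.
Qed.

Lemma rann_idem_mul_eq0 s e f : rann_idem s e -> f \in s -> f * e = 0.
Proof. by move=> [[idem _] E] fs; apply: (proj2 (E e) idem). Qed.

Lemma right_central_pp_of_right_pp : abelian_ring T -> right_pp T -> right_central_pp.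
Proof.
move=> ab pp f; have [e [idem E]] := pp f; exists e; split; first by split=> //; apply: ab.
have fe : f * e = 0 by apply: (E e).2 => //; exists 1; rewrite mulr1.
move=> g; rewrite mul_eq0_seq1; split=> [fg | <-]; last by rewrite mulrA fe mul0r.
have [t ->] : exists t, g = e * t by apply/E => _ ->.
by rewrite mulrA idem.
Qed.

Section Reduced.
Hypothesis red : reduced_ring.

Lemma reduced_mul_eq0C (a b : T) : a * b = 0 -> b * a = 0.
Proof. by move=> ab; apply: red; rewrite mulrA -(mulrA b) ab mulr0 mul0r. Qed.

Lemma reduced_mul_eq0M (a t b : T) : a * b = 0 -> a * t * b = 0.
Proof.
move=> /reduced_mul_eq0C ba; apply: red.
by rewrite -!mulrA (mulrA b) ba mul0r !mulr0.
Qed.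

Lemma rideal_gen_mem (s : seq T) f : f \in s -> rideal_gen s f.
Proof.
move=> fs; have lt_fs : (index f s < size s)%N by rewrite index_mem.
exists (fun k => (k == Ordinal lt_fs)%:R).
rewrite (bigD1 (Ordinal lt_fs)) //= nth_index // eqxx mulr1 big1 ?addr0 // => k.
by move=> /negbTE ->; rewrite mulr0.
Qed.

Lemma lideal_gen_mem (s : seq T) f : f \in s -> lideal_gen s f.
Proof.
move=> fs; have lt_fs : (index f s < size s)%N by rewrite index_mem.
exists (fun k => (k == Ordinal lt_fs)%:R).
rewrite (bigD1 (Ordinal lt_fs)) //= nth_index // eqxx mul1r big1 ?addr0 // => k.
by move=> /negbTE ->; rewrite mul0r.
Qed.

Lemma r_ann_rideal_gen (s : seq T) b :
  r_ann (rideal_gen s) b <-> forall f, f \in s -> f * b = 0.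
Proof.
split=> [ann f /rideal_gen_mem/ann // | ann y [t ->]].
by rewrite mulr_suml big1 // => k _; apply/reduced_mul_eq0M/ann/mem_nth.
Qed.

Lemma l_ann_lideal_gen (s : seq T) b :
  l_ann (lideal_gen s) b <-> forall f, f \in s -> f * b = 0.
Proof.
split=> [ann f /lideal_gen_mem/ann/reduced_mul_eq0C // | ann y [t ->]].
rewrite mulr_sumr big1 // => k _; rewrite mulrA.
by apply/reduced_mul_eq0M/reduced_mul_eq0C/ann/mem_nth.
Qed.

Lemma ac_of_right_central_pp : right_central_pp -> ac_right T /\ ac_left T.
Proof.
move=> pp; suff ac (s : seq T) : exists c : T, forall b : T,
    (forall f, f \in s -> f * b = 0) <-> (forall f, f \in [:: c] -> f * b = 0).
  split=> s; have [c Ec] := ac s; exists c => b.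
    by rewrite !r_ann_rideal_gen.
  by rewrite !l_ann_lideal_gen.
have [e [_ E]] := rann_idem_seq pp s; exists (1 - e) => b; rewrite E.
have -> : (forall f, f \in [:: 1 - e] -> f * b = 0) <-> (1 - e) * b = 0.
  by split=> [-> | eb f]; rewrite ?inE // => /eqP ->.
rewrite mulrBl mul1r; split=> [-> | /eqP]; first by rewrite subrr.
by rewrite subr_eq0 => /eqP <-.
Qed.

Lemma right_central_pp_of_left_pp : abelian_ring T -> left_pp T -> right_central_pp.
Proof.
move=> ab pp f; have [e [idem E]] := pp f; exists e; split; first by split=> //; apply: ab.
have ef : e * f = 0 by apply: (E e).2 => //; exists 1; rewrite mul1r.
move=> g; rewrite mul_eq0_seq1; split=> [/reduced_mul_eq0C gf | <-].
  have [t ->] : exists t, g = t * e by apply/E => _ ->.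
  by rewrite (ab _ idem) -mulrA idem.
by apply: (@reduced_mul_eq0C (e * g)); rewrite (ab _ idem) -mulrA ef mulr0.
Qed.

End Reduced.
End Annihilators.

Section Monomials.
Variables (A : pzRingType) (n : nat) (x : 'I_n -> A).
Local Notation mon := (smon x).

Lemma smon_enum a : mon a = \prod_(i <- enum 'I_n) x i ^+ a i.
Proof. by rewrite /smon enumT. Qed.

Lemma smon0 : mon (ezero n) = 1.
Proof. by rewrite /smon big1 // => i _; rewrite ffunE expr0. Qed.

Lemma smon_eadd_eunit a j : expo_upto j a -> mon a * x j = mon (eadd a (eunit j)).
Proof.
move=> a_j; have [l1 [l2 [E lt_l1 gt_l2]]] := enum_split j.
rewrite !smon_enum E !big_cat !big_cons /=.
rewrite [\prod_(i <- l2) x i ^+ a i]big1_seq => [|i /andP[_ /gt_l2/a_j] -> //].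
rewrite [\prod_(i <- l2) _]big1_seq => [|i /andP[_ il2]]; last first.
  by rewrite !ffunE a_j ?gt_l2 //; case: eqP => // ij; move: (gt_l2 _ il2); rewrite ij ltnn.
rewrite !mulr1 ffunE ffunE eqxx addn1 exprSr mulrA; congr (_ * _); congr (_ * _).
apply: eq_big_seq => i il1; rewrite !ffunE.
by case: eqP => [ij | _]; [move: (lt_l1 _ il1); rewrite ij ltnn | rewrite addn0].
Qed.

Lemma smon_eunit i : mon (eunit i) = x i.
Proof.
have := smon_eadd_eunit (@expo_upto0 n i); rewrite smon0 mul1r => ->.
by congr mon; apply/ffunP => k; rewrite !ffunE.
Qed.

End Monomials.

Section SigmaPow.
Variables (R : pzRingType) (n : nat) (sigma : 'I_n -> R -> R).
Local Notation sp := (sigma_pow sigma).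

Definition mult_hom (f : R -> R) := [/\ {morph f : u v / u * v}, f 1 = 1 & f 0 = 0].

Local Notation step b := (fun i f => iter (b i) (sigma i) \o f).

Lemma foldr_step_comp (b : expo n) l (g : R -> R) r :
  foldr (step b) g l r = foldr (step b) id l (g r).
Proof. by elim: l => //= i l ->. Qed.

Lemma eq_in_foldr_step (b c : expo n) l r : {in l, b =1 c} ->
  foldr (step b) id l r = foldr (step c) id l r.
Proof.
elim: l => //= i l IH bc; rewrite IH ?bc ?inE ?eqxx // => k kl.
by apply: bc; rewrite inE kl orbT.
Qed.

Lemma foldr_step_id (b : expo n) l r : {in l, forall i, b i = 0%N} ->
  foldr (step b) id l r = r.
Proof.
elim: l => //= i l IH b0; rewrite IH ?b0 ?inE ?eqxx // => k kl.
by apply: b0; rewrite inE kl orbT.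
Qed.

Lemma mult_hom_sigma_pow (b : expo n) :
  (forall i, mult_hom (sigma i)) -> mult_hom (sp b).
Proof.
move=> hom; rewrite /sigma_pow; elim: (enum 'I_n) => [|i l [IHM IH1 IH0]] //=.
have [M1 O1 Z1] : mult_hom (iter (b i) (sigma i)).
  have [M O Z] := hom i; elim: (b i) => [|k [IHk1 IHk2 IHk3]] //=.
  by split=> [u v| |] /=; rewrite ?IHk1 ?M ?IHk2 ?O ?IHk3 ?Z.
by split=> [u v| |] /=; rewrite ?IHM ?M1 ?IH1 ?O1 ?IH0 ?Z1.
Qed.

Lemma sigma_pow0 r : sp (ezero n) r = r.
Proof. by rewrite /sigma_pow foldr_step_id // => i _; rewrite ffunE. Qed.

Lemma sigma_pow_eadd_eunit a j r :
  expo_upto j a -> sp (eadd a (eunit j)) r = sp a (sigma j r).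
Proof.
move=> a_j; have [l1 [l2 [E lt_l1 gt_l2]]] := enum_split j.
rewrite /sigma_pow E !foldr_cat foldr_step_comp [RHS]foldr_step_comp /=.
rewrite [foldr _ _ l2 r]foldr_step_id => [|i il2]; last first.
  rewrite !ffunE a_j ?gt_l2 //; case: eqP => // ij.
  by move: (gt_l2 _ il2); rewrite ij ltnn.
rewrite [in RHS](@foldr_step_id a l2) => [|i /gt_l2/a_j //].
rewrite ffunE ffunE eqxx addn1 iterSr; apply: eq_in_foldr_step => i il1.
rewrite !ffunE; case: eqP => [ij | _]; last by rewrite addn0.
by move: (lt_l1 _ il1); rewrite ij ltnn.
Qed.

Lemma sigma_pow_eunit i r : sp (eunit i) r = sigma i r.
Proof.
have := sigma_pow_eadd_eunit r (@expo_upto0 n i); rewrite sigma_pow0 => <-.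
by congr sp; apply/ffunP => k; rewrite !ffunE.
Qed.

End SigmaPow.

Lemma sum_sub_seq (V : nmodType) (T : eqType) (s1 s : seq T) (F : T -> V) :
  uniq s1 -> uniq s -> {subset s1 <= s} ->
  \sum_(m <- s1) F m = \sum_(m <- s) (if m \in s1 then F m else 0).
Proof.
move=> U1 U sub; rewrite -big_mkcond -big_filter; apply: perm_big.
apply: uniq_perm => //; first exact: filter_uniq.
by move=> m; rewrite mem_filter; case: (boolP (m \in s1)) => //= /sub ->.
Qed.

Lemma eq_big_seq_support (V : nmodType) (T : eqType) (s1 s2 : seq T) (G : T -> V) :
  uniq s1 -> uniq s2 -> (forall m, m \notin s1 -> G m = 0) ->
  (forall m, m \notin s2 -> G m = 0) -> \sum_(m <- s1) G m = \sum_(m <- s2) G m.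
Proof.
move=> U1 U2 G1 G2; set s := undup (s1 ++ s2); have U : uniq s := undup_uniq _.
have sub1 : {subset s1 <= s} by move=> m m1; rewrite mem_undup mem_cat m1.
have sub2 : {subset s2 <= s} by move=> m m2; rewrite mem_undup mem_cat m2 orbT.
rewrite (sum_sub_seq G U1 U sub1) (sum_sub_seq G U2 U sub2); apply: eq_bigr => m _.
by case: ifPn => m1; case: ifPn => m2 //; [rewrite G2 | rewrite G1].
Qed.

Lemma big_seq_pick (V : nmodType) (T : eqType) (s : seq T) a (F : T -> V) :
  uniq s -> a \in s -> \sum_(i <- s) (if i == a then F i else 0) = F a.
Proof. by move=> Us sa; rewrite -big_mkcond -big_filter (filter_pred1_uniq Us sa) big_seq1. Qed.

Section SkewPBW.
Variables (R A : pzRingType) (phi : {rmorphism R -> A}) (n : nat).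
Variables (x : 'I_n -> A) (d : 'I_n -> 'I_n -> R) (sigma delta : 'I_n -> R -> R).
Hypothesis PBW : skew_PBW phi x d.
Hypothesis x_phi : forall i r, x i * phi r = phi (sigma i r) * x i + phi (delta i r).
Hypothesis d_inv : forall i j : 'I_n, (i < j)%N -> invertible_el (d i j).

Local Notation mon := (smon x).
Local Notation sp := (sigma_pow sigma).

Lemma smon_indep (s : seq (expo n)) (c1 c2 : expo n -> R) : uniq s ->
  \sum_(m <- s) phi (c1 m) * mon m = \sum_(m <- s) phi (c2 m) * mon m ->
  {in s, c1 =1 c2}.
Proof.
move=> U E m ms; have [_ _ indep _ _] := PBW; apply/eqP; rewrite -subr_eq0; apply/eqP.
apply: (indep _ (fun m => c1 m - c2 m) U _ _ ms).
by rewrite (eq_bigr (fun m => phi (c1 m) * mon m - phi (c2 m) * mon m)) ?sumrB ?E ?subrr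
  // => k _; rewrite rmorphB mulrBl.
Qed.

Lemma phi_x_inj i (p q p' q' : R) :
  phi p * x i + phi q = phi p' * x i + phi q' -> p = p' /\ q = q'.
Proof.
pose c (u v : R) (m : expo n) := if m == eunit i then u else v.
have U : uniq [:: eunit i; ezero n] by rewrite /= inE eunit_neq0.
have E u v : phi u * x i + phi v = \sum_(m <- [:: eunit i; ezero n]) phi (c u v m) * mon m.
  by rewrite big_cons big_seq1 /c eqxx eq_sym (negbTE (eunit_neq0 i)) smon_eunit smon0 mulr1.
rewrite !E => /(smon_indep U) c_eq; split.
  by have := c_eq (eunit i); rewrite /c eqxx inE eqxx => /(_ isT).
have := c_eq (ezero n); rewrite /c eq_sym (negbTE (eunit_neq0 i)) !inE eqxx orbT.
exact.
Qed.
Lemma sigma_deltaD (i : 'I_n) (a b : R) : sigma i (a + b) = sigma i a + sigma i b /\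
   delta i (a + b) = delta i a + delta i b.
Proof.
apply: (@phi_x_inj i); rewrite -x_phi !rmorphD /= mulrDr !x_phi mulrDl.
by rewrite addrACA.
Qed.

Lemma sigma_deltaM (i : 'I_n) (a b : R) : sigma i (a * b) = sigma i a * sigma i b /\
   delta i (a * b) = sigma i a * delta i b + delta i a * b.
Proof.
apply: (@phi_x_inj i); rewrite -x_phi !rmorphM /= mulrA x_phi mulrDl -mulrA x_phi.
by rewrite mulrDr !rmorphD !rmorphM /= mulrA addrA.
Qed.

Lemma sigma_delta1 (i : 'I_n) : sigma i 1 = 1 /\ delta i 1 = 0.
Proof. by apply: (@phi_x_inj i); rewrite -x_phi rmorph1 rmorph0 mulr1 mul1r addr0. Qed.

Lemma sigmaB i (a b : R) : sigma i (a - b) = sigma i a - sigma i b.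
Proof. by have := (sigma_deltaD i (a - b) b).1; rewrite subrK => ->; rewrite addrK. Qed.

Lemma mult_hom_sigma i : mult_hom (sigma i).
Proof.
split=> [u v | |]; [exact: (sigma_deltaM i u v).1 | exact: (sigma_delta1 i).1 |].
by rewrite -[in sigma i _](subrr 0) sigmaB subrr.
Qed.

Lemma mult_hom_sp b : mult_hom (sp b).
Proof. exact: mult_hom_sigma_pow mult_hom_sigma. Qed.

Lemma smon_span z : exists s c, z = \sum_(m <- s) phi (c m) * mon m.
Proof. by have [_ span _ _ _] := PBW; apply: span. Qed.

Lemma smon_span_uniq z : exists sc : seq (expo n) * (expo n -> R),
  uniq sc.1 /\ z = \sum_(m <- sc.1) phi (sc.2 m) * mon m.
Proof.
have [s [c ->]] := smon_span z; elim: s => [|m s [[s' c'] /= [U E]]].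
  by exists ([::], c); rewrite !big_nil.
rewrite big_cons E; have [ms | ms] := boolP (m \in s').
  exists (s', fun k => if k == m then c m + c' k else c' k) => /=; split=> //.
  rewrite [RHS](bigD1_seq m) //= [in LHS](bigD1_seq m) //= eqxx rmorphD mulrDl -addrA.
  by congr (_ + (_ + _)); apply: eq_bigr => k /negbTE ->.
exists (m :: s', fun k => if k == m then c m else c' k) => /=; split; first by rewrite ms.
rewrite big_cons eqxx; congr (_ + _); apply: eq_big_seq => k ks.
by case: eqP ks ms => // -> ->.
Qed.

Lemma sum_smon_sub (s u : seq (expo n)) (c : expo n -> R) :
  uniq s -> uniq u -> {subset s <= u} ->
  \sum_(m <- s) phi (c m) * mon m =
    \sum_(m <- u) phi (if m \in s then c m else 0) * mon m.
Proof.
move=> Us Uu su; rewrite (sum_sub_seq _ Us Uu su); apply: eq_bigr => m _.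
by case: ifP; rewrite ?rmorph0 ?mul0r.
Qed.

Definition smon_rep (z : A) :=
  proj1_sig (constructive_indefinite_description _ (smon_span_uniq z)).
(* [supp z] may also list monomials whose coefficient is zero. *)
Definition supp (z : A) := (smon_rep z).1.
Definition coef (z : A) (m : expo n) : R :=
  if m \in supp z then (smon_rep z).2 m else 0.

Lemma smon_rep_spec z :
  uniq (supp z) /\ z = \sum_(m <- supp z) phi ((smon_rep z).2 m) * mon m.
Proof. exact: (proj2_sig (constructive_indefinite_description _ (smon_span_uniq z))). Qed.

Lemma coef_rep z (s : seq (expo n)) (c : expo n -> R) : uniq s ->
  z = \sum_(m <- s) phi (c m) * mon m -> forall m, coef z m = if m \in s then c m else 0.
Proof.
move=> Us Ez m; have [Uz Ez'] := smon_rep_spec z; set u := undup (supp z ++ s).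
have Uu : uniq u := undup_uniq _.
have [sub_z sub_s] : {subset supp z <= u} /\ {subset s <= u}.
  by split=> k k_in; rewrite mem_undup mem_cat k_in ?orbT.
have [mu | mu] := boolP (m \in u).
  apply: (@smon_indep u (coef z) (fun m => if m \in s then c m else 0) Uu _ m mu).
  have E1 := sum_smon_sub (smon_rep z).2 Uz Uu sub_z.
  have E2 := sum_smon_sub c Us Uu sub_s.
  rewrite -E2 -Ez [RHS]Ez' [RHS]E1; apply: eq_bigr => k _.
  by rewrite /coef.
have /negbTE zm : m \notin supp z by apply: contra mu; apply: sub_z.
have /negbTE sm : m \notin s by apply: contra mu; apply: sub_s.
by rewrite /coef zm sm.
Qed.

Lemma supp_coef z m : coef z m != 0 -> m \in supp z.
Proof. by rewrite /coef; case: ifP; rewrite ?eqxx. Qed.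

Lemma expand_coef z (s : seq (expo n)) : uniq s ->
  (forall m, coef z m != 0 -> m \in s) -> z = \sum_(m <- s) phi (coef z m) * mon m.
Proof.
move=> U supp_s; have [Uz {1}->] := smon_rep_spec z.
rewrite (eq_big_seq (fun m => phi (coef z m) * mon m)) => [|m ms]; last by rewrite /coef ms.
apply: eq_big_seq_support => // m m_out; last first.
  by have [-> | /supp_s] := eqVneq (coef z m) 0; rewrite ?rmorph0 ?mul0r // (negbTE m_out).
by rewrite /coef (negbTE m_out) rmorph0 mul0r.
Qed.

Lemma expand_supp z : z = \sum_(m <- supp z) phi (coef z m) * mon m.
Proof. by apply: expand_coef; [exact: (smon_rep_spec z).1 | exact: supp_coef]. Qed.

Lemma coef0 m : coef 0 m = 0.
Proof. by rewrite (@coef_rep 0 [::] (fun=> 0)) ?big_nil. Qed.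

Lemma coef_smon b m : coef (mon b) m = (m == b)%:R.
Proof.
rewrite (@coef_rep _ [:: b] (fun=> 1)) ?big_seq1 ?rmorph1 ?mul1r // inE.
by case: eqP.
Qed.

Lemma coefD y z m : coef (y + z) m = coef y m + coef z m.
Proof.
set s := undup (supp y ++ supp z); have U : uniq s := undup_uniq _.
have sy k : coef y k != 0 -> k \in s by move/supp_coef => k_in; rewrite mem_undup mem_cat k_in.
have sz k : coef z k != 0 -> k \in s.
  by move/supp_coef => k_in; rewrite mem_undup mem_cat k_in orbT.
have E : y + z = \sum_(k <- s) phi (coef y k + coef z k) * mon k.
  rewrite {1}(expand_coef U sy) {1}(expand_coef U sz) -big_split.
  by apply: eq_bigr => k _; rewrite rmorphD mulrDl.
rewrite (coef_rep U E); case: ifPn => // ms.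
by rewrite (contraNeq (@sy m) ms) (contraNeq (@sz m) ms) addr0.
Qed.

Lemma coef_phiM r z m : coef (phi r * z) m = r * coef z m.
Proof.
have E : phi r * z = \sum_(k <- supp z) phi (r * coef z k) * mon k.
  rewrite {1}(expand_supp z) mulr_sumr; apply: eq_bigr => k _.
  by rewrite rmorphM mulrA.
rewrite (coef_rep (smon_rep_spec z).1 E); case: ifPn => // m_out.
by rewrite /coef (negbTE m_out) mulr0.
Qed.

Lemma coefN z m : coef (- z) m = - coef z m.
Proof. by rewrite -mulN1r -(rmorphN1 phi) coef_phiM mulN1r. Qed.

Lemma coefB y z m : coef (y - z) m = coef y m - coef z m.
Proof. by rewrite coefD coefN. Qed.

Lemma coef_sum (I : Type) (l : seq I) (F : I -> A) m :
  coef (\sum_(i <- l) F i) m = \sum_(i <- l) coef (F i) m.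
Proof. exact: (big_morph (fun z => coef z m) (fun y z => coefD y z m) (coef0 m)). Qed.

Lemma coef_eq0 z : (forall m, coef z m = 0) -> z = 0.
Proof. by move=> z0; rewrite (expand_supp z) big1 // => m _; rewrite z0 rmorph0 mul0r. Qed.

Definition deg_lt k z := forall m, (k <= edeg m)%N -> coef z m = 0.

Lemma deg_lt0 k : deg_lt k 0.
Proof. by move=> m _; rewrite coef0. Qed.

Lemma deg_ltD k y z : deg_lt k y -> deg_lt k z -> deg_lt k (y + z).
Proof. by move=> ky kz m km; rewrite coefD ky ?kz ?addr0. Qed.

Lemma deg_lt_phiM k r z : deg_lt k z -> deg_lt k (phi r * z).
Proof. by move=> kz m km; rewrite coef_phiM kz ?mulr0. Qed.

Lemma deg_lt_le k k' z : (k <= k')%N -> deg_lt k z -> deg_lt k' z.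
Proof. by move=> kk' kz m km; apply/kz/(leq_trans kk' km). Qed.

Lemma deg_lt_smon k b : (edeg b < k)%N -> deg_lt k (mon b).
Proof.
move=> bk m km; rewrite coef_smon; case: eqP => // mb.
by move: bk; rewrite -mb ltnNge km.
Qed.

Lemma deg_lt_sum (I : Type) k (l : seq I) (F : I -> A) :
  (forall i, deg_lt k (F i)) -> deg_lt k (\sum_(i <- l) F i).
Proof.
move=> kF; elim: l => [|i l IH]; first by rewrite big_nil; apply: deg_lt0.
by rewrite big_cons; apply: deg_ltD.
Qed.

Lemma deg_lt_mulr k k' y z : (forall m, (edeg m < k)%N -> deg_lt k' (mon m * y)) ->
  deg_lt k z -> deg_lt k' (z * y).
Proof.
move=> my kz; rewrite (expand_supp z) mulr_suml; apply: deg_lt_sum => m.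
have [-> | nz] := eqVneq (coef z m) 0; first by rewrite rmorph0 !mul0r; apply: deg_lt0.
rewrite -mulrA; apply/deg_lt_phiM/my.
by rewrite ltnNge; apply: contra nz => /kz ->.
Qed.

Definition eqmod_deg k u v := deg_lt k (u - v).

Lemma eqmod_deg_refl k u : eqmod_deg k u u.
Proof. by rewrite /eqmod_deg subrr; apply: deg_lt0. Qed.

Lemma eqmod_deg_trans k v u w : eqmod_deg k u v -> eqmod_deg k v w -> eqmod_deg k u w.
Proof. by move=> uv vw; have := deg_ltD uv vw; rewrite addrA subrK. Qed.

Lemma eqmod_deg_diff k w u v : u - v = w -> deg_lt k w -> eqmod_deg k u v.
Proof. by rewrite /eqmod_deg => ->. Qed.

Lemma eqmod_deg_lt k u v : eqmod_deg k u v -> deg_lt k v -> deg_lt k u.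
Proof. by move=> uv kv; have := deg_ltD uv kv; rewrite subrK. Qed.

Lemma eqmod_deg_phiM k r u v : eqmod_deg k u v -> eqmod_deg k (phi r * u) (phi r * v).
Proof. by rewrite /eqmod_deg -mulrBr; apply: deg_lt_phiM. Qed.

Definition right_unit (c : R) := exists c', c * c' = 1.

Lemma right_unit1 : right_unit 1.
Proof. by exists 1; rewrite mulr1. Qed.

Lemma right_unitM c1 c2 : right_unit c1 -> right_unit c2 -> right_unit (c1 * c2).
Proof. by move=> [u1 cu1] [u2 cu2]; exists (u2 * u1); rewrite mulrA -(mulrA c1) cu2 mulr1. Qed.

Lemma right_unit_mul_eq0 c a : right_unit c -> a * c = 0 -> a = 0.
Proof. by move=> [u cu] ac; rewrite -[a]mulr1 -cu mulrA ac mul0r. Qed.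

Definition smon_phi_comm a :=
  forall r, eqmod_deg (edeg a) (mon a * phi r) (phi (sp a r) * mon a).
Definition smon_x_lead a := forall i, exists2 c, right_unit c &
  eqmod_deg (edeg a).+1 (mon a * x i) (phi c * mon (eadd a (eunit i))).

Lemma deg_lt_mul_phi k z r : (forall b, (edeg b < k)%N -> smon_phi_comm b) ->
  deg_lt k z -> deg_lt k (z * phi r).
Proof.
move=> comm; apply: deg_lt_mulr => m mk.
apply: (eqmod_deg_lt (deg_lt_le (ltnW mk) (comm m mk r))).
exact/deg_lt_phiM/deg_lt_smon.
Qed.

Lemma deg_lt_mul_x k z i : (forall b, (edeg b < k)%N -> smon_x_lead b) ->
  deg_lt k z -> deg_lt k.+1 (z * x i).
Proof.
move=> lead; apply: deg_lt_mulr => m mk; have [c _ E] := lead m mk i.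
apply: (eqmod_deg_lt (deg_lt_le _ E)); first by rewrite ltnS ltnW.
by apply/deg_lt_phiM/deg_lt_smon; rewrite edeg_eadd_eunit ltnS.
Qed.

Section LeadingTerms.
Variable a : expo n.
Hypothesis IH : forall b, (edeg b < edeg a)%N -> smon_phi_comm b /\ smon_x_lead b.

Lemma smon_phi_comm_step : smon_phi_comm a.
Proof.
move=> r; have [-> | /eqP/expo_split_last[j [a' [a'j Ea]]]] := eqVneq a (ezero n).
  by rewrite smon0 sigma_pow0 mul1r mulr1; apply: eqmod_deg_refl.
have lt_a' : (edeg a' < edeg a)%N by rewrite Ea edeg_eadd_eunit.
have comm_lt b : (edeg b < edeg a)%N -> smon_phi_comm b by move=> /IH[].
have lead_lt b : (edeg b < edeg a')%N -> smon_x_lead b.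
  by move=> ba'; apply: (IH (ltn_trans ba' lt_a')).2.
rewrite [in mon _]Ea [in sp _ _]Ea -(smon_eadd_eunit x a'j) (sigma_pow_eadd_eunit sigma _ a'j).
apply: (@eqmod_deg_trans _ (mon a' * phi (sigma j r) * x j)).
  apply: (@eqmod_deg_diff _ (mon a' * phi (delta j r))).
    by rewrite -mulrA x_phi mulrDr mulrA addrAC subrr add0r.
  exact/(deg_lt_mul_phi _ comm_lt)/deg_lt_smon.
apply: (@eqmod_deg_diff _ ((mon a' * phi (sigma j r) - phi (sp a' (sigma j r)) * mon a') * x j)).
  by rewrite mulrBl mulrA.
by rewrite Ea edeg_eadd_eunit; apply/(deg_lt_mul_x _ lead_lt)/(IH lt_a').1.
Qed.

Lemma smon_x_lead_step : smon_x_lead a.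
Proof.
move=> i; have [a_i | [j [a' [ij a'j Ea]]]] := expo_upto_or_split a i.
  exists 1; first exact: right_unit1.
  by rewrite rmorph1 mul1r (smon_eadd_eunit x a_i); apply: eqmod_deg_refl.
have deg_a : edeg a = (edeg a').+1 by rewrite Ea edeg_eadd_eunit.
have [comm_a' lead_a'] := IH (eq_leq (esym deg_a)).
have comm_lt b : (edeg b < (edeg a').+1)%N -> smon_phi_comm b by rewrite -deg_a => /IH[].
have lead_lt b : (edeg b < (edeg a').+1)%N -> smon_x_lead b by rewrite -deg_a => /IH[].
have lead_lt' b : (edeg b < edeg a')%N -> smon_x_lead b by move/ltnW/lead_lt.
have [c1 c1u E1] := lead_a' i; have [_ _ _ _ /(_ i j)[_ [r0 [rs Exy]]]] := PBW.
set s := sp a' (d i j); exists (s * c1).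
  apply: right_unitM => //; have [u [_ du]] := d_inv ij.
  by exists (sp a' u); have [spM sp1 _] := mult_hom_sp a'; rewrite /s -spM du sp1.
have -> : mon (eadd a (eunit i)) = mon (eadd a' (eunit i)) * x j.
  rewrite (smon_eadd_eunit x (expo_uptoD a'j (ltnW ij))) Ea.
  by congr mon; rewrite -!eaddA (eaddC (eunit j)).
rewrite [in mon _]Ea -(smon_eadd_eunit x a'j) deg_a.
set Z := phi r0 + _ in Exy.
have xji : x j * x i = phi (d i j) * x i * x j + Z by rewrite -Exy addrC subrK.
apply: (@eqmod_deg_trans _ (mon a' * phi (d i j) * x i * x j)).
  apply: (@eqmod_deg_diff _ (mon a' * Z)).
    by rewrite -mulrA xji mulrDr !mulrA addrAC subrr add0r.
  rewrite /Z mulrDr mulr_sumr; apply: deg_ltD.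
    exact/(deg_lt_le (leqnSn _))/(deg_lt_mul_phi _ comm_lt)/deg_lt_smon.
  apply: deg_lt_sum => k; rewrite mulrA.
  exact/(deg_lt_mul_x _ lead_lt)/(deg_lt_mul_phi _ comm_lt)/deg_lt_smon.
apply: (@eqmod_deg_trans _ (phi s * mon a' * x i * x j)).
  apply: (@eqmod_deg_diff _ ((mon a' * phi (d i j) - phi s * mon a') * x i * x j)).
    by rewrite !mulrBl.
  exact/(deg_lt_mul_x _ lead_lt)/(deg_lt_mul_x _ lead_lt')/comm_a'.
apply: (@eqmod_deg_diff _ (phi s * ((mon a' * x i - phi c1 * mon (eadd a' (eunit i))) * x j))).
  by rewrite rmorphM !mulrBl !mulrBr !mulrA.
exact/deg_lt_phiM/(deg_lt_mul_x _ lead_lt)/E1.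
Qed.

End LeadingTerms.


Lemma smon_lead a : smon_phi_comm a /\ smon_x_lead a.
Proof.
elim: {a}(edeg a).+1 {-2}a (ltnSn (edeg a)) => // k IH a; rewrite ltnS => ak.
have IHa b : (edeg b < edeg a)%N -> smon_phi_comm b /\ smon_x_lead b.
  by move=> ba; apply/IH/(leq_trans ba ak).
by split; [apply: smon_phi_comm_step | apply: smon_x_lead_step].
Qed.

Lemma deg_lt_mulr_x k z i : deg_lt k z -> deg_lt k.+1 (z * x i).
Proof. by apply: deg_lt_mul_x => b _; case: (smon_lead b). Qed.

Lemma deg_lt_mulr_smon b k z : deg_lt k z -> deg_lt (k + edeg b) (z * mon b).
Proof.
elim/expo_ind: b k z => [|b j bj IH] k z kz; first by rewrite smon0 mulr1 edeg0 addn0.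
rewrite -(smon_eadd_eunit x bj) mulrA edeg_eadd_eunit addnS.
exact/deg_lt_mulr_x/IH.
Qed.

Lemma smon_mul_lead a b : exists2 c, right_unit c &
  eqmod_deg (edeg a + edeg b) (mon a * mon b) (phi c * mon (eadd a b)).
Proof.
elim/expo_ind: b => [|b j bj [c1 c1u E1]].
  exists 1; first exact: right_unit1.
  by rewrite smon0 mulr1 rmorph1 mul1r eadd0; apply: eqmod_deg_refl.
have [c2 c2u E2] := (smon_lead (eadd a b)).2 j.
exists (c1 * c2); first exact: right_unitM.
rewrite -(smon_eadd_eunit x bj) edeg_eadd_eunit addnS mulrA.
apply: (@eqmod_deg_trans _ (phi c1 * mon (eadd a b) * x j)).
  by apply: (@eqmod_deg_diff _ ((mon a * mon b - phi c1 * mon (eadd a b)) * x j));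
    [rewrite mulrBl | apply: deg_lt_mulr_x].
rewrite -mulrA rmorphM -mulrA eaddA; apply: eqmod_deg_phiM.
by rewrite edeg_eadd in E2.
Qed.

Lemma coef_smon_phi_smon a b g r : (edeg a + edeg b <= edeg g)%N ->
  coef (mon a * (phi r * mon b)) g = sp a r * coef (mon a * mon b) g.
Proof.
move=> dg; have /(_ g dg) := deg_lt_mulr_smon (b := b) ((smon_lead a).1 r).
by rewrite mulrBl coefB -!mulrA coef_phiM => /eqP; rewrite subr_eq0 => /eqP.
Qed.

Lemma coef_smon_mul a b g : (edeg a + edeg b <= edeg g)%N ->
  exists2 c, right_unit c & coef (mon a * mon b) g = c * (g == eadd a b)%:R.
Proof.
move=> dg; have [c cu /(_ g dg)] := smon_mul_lead a b.
by rewrite coefB coef_phiM coef_smon => /eqP; rewrite subr_eq0 => /eqP; exists c.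
Qed.

Definition supp_le z a0 := forall a, mlt a0 a -> coef z a = 0.

Lemma mle_supp_le z a0 a : supp_le z a0 -> coef z a != 0 -> mle a a0.
Proof. by move=> za0; apply: contraR; rewrite /mle -ltNge => /za0 ->. Qed.

Lemma exists_supp_le z : z != 0 -> exists2 b0, coef z b0 != 0 & supp_le z b0.
Proof.
move=> nz; set l := [seq b <- supp z | coef z b != 0].
have [b0 b0l max_b0] : exists2 b0, b0 \in l & forall b, b \in l -> mle b b0.
  apply: exists_mle_max; apply: contra nz => /eqP l0; apply/eqP/coef_eq0 => m.
  apply/eqP; apply: contraT => nzm.
  have : m \in l by rewrite mem_filter nzm supp_coef.
  by rewrite l0.
exists b0; first by move: b0l; rewrite mem_filter => /andP[].
move=> b lt; apply/eqP; apply: contraT => nzb.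
have : mle b b0 by apply: max_b0; rewrite mem_filter nzb supp_coef.
by rewrite /mle leNgt -/(mlt b0 b) lt.
Qed.

Lemma coef_smon_phi_smon_lead a b a0 b0 r : mle a a0 -> mle b b0 ->
  coef (mon a * (phi r * mon b)) (eadd a0 b0) =
    if (a == a0) && (b == b0) then sp a r * coef (mon a0 * mon b0) (eadd a0 b0) else 0.
Proof.
move=> aa0 bb0; have dg : (edeg a + edeg b <= edeg (eadd a0 b0))%N.
  by rewrite edeg_eadd leq_add ?mle_edeg.
rewrite coef_smon_phi_smon //.
have [/andP[/eqP -> /eqP ->] // | nab] := boolP ((a == a0) && (b == b0)).
have [c _ ->] := coef_smon_mul dg; case: eqP => [E | _]; last by rewrite !mulr0.
by have [ea eb] := mle_eadd_cancel aa0 bb0 (esym E); rewrite ea eb !eqxx in nab.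
Qed.

Lemma right_unit_coef_smon_mul a b : right_unit (coef (mon a * mon b) (eadd a b)).
Proof.
have [c cu ->] := @coef_smon_mul a b (eadd a b) (eq_leq (esym (edeg_eadd a b))).
by rewrite eqxx mulr1.
Qed.

Lemma coef_mul_lead f h a0 b0 : supp_le f a0 -> supp_le h b0 ->
  coef (f * h) (eadd a0 b0) =
    coef f a0 * sp a0 (coef h b0) * coef (mon a0 * mon b0) (eadd a0 b0).
Proof.
move=> fa0 hb0; set V := _ * coef (mon a0 * mon b0) _; have [_ _ sp_0] := mult_hom_sp a0.
set sf := undup (a0 :: supp f); set sh := undup (b0 :: supp h).
have Ef : f = \sum_(a <- sf) phi (coef f a) * mon a.
  by apply: expand_coef (undup_uniq _) _ => a /supp_coef fa; rewrite mem_undup inE fa orbT.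
have Eh : h = \sum_(b <- sh) phi (coef h b) * mon b.
  by apply: expand_coef (undup_uniq _) _ => b /supp_coef hb; rewrite mem_undup inE hb orbT.
have term a b : coef (phi (coef f a) * mon a * (phi (coef h b) * mon b)) (eadd a0 b0) =
    if a == a0 then (if b == b0 then V else 0) else 0.
  rewrite -mulrA coef_phiM; have [fa_0 | nzf] := eqVneq (coef f a) 0.
    by rewrite fa_0 mul0r; case: eqP => // ea; rewrite /V -ea fa_0 !mul0r if_same.
  have [hb_0 | nzh] := eqVneq (coef h b) 0.
    rewrite hb_0 rmorph0 mul0r mulr0 coef0 mulr0.
    by case: eqP => // _; case: eqP => // eb; rewrite /V -eb hb_0 sp_0 mulr0 mul0r.
  rewrite (coef_smon_phi_smon_lead _ (mle_supp_le fa0 nzf) (mle_supp_le hb0 nzh)).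
  by case: (a =P a0) => [-> | _]; case: (b =P b0) => [-> | _]; rewrite /= ?mulr0 ?mulrA.
rewrite {1}Ef {1}Eh mulr_suml coef_sum.
rewrite (eq_bigr (fun a => if a == a0 then V else 0)) => [|a _].
  by rewrite big_seq_pick ?undup_uniq // mem_undup inE eqxx.
rewrite mulr_sumr coef_sum (eq_bigr (fun b => if a == a0 then (if b == b0 then V else 0) else 0)).
  by case: eqP => _; [rewrite big_seq_pick ?undup_uniq // mem_undup inE eqxx | rewrite big1].
by move=> b _; rewrite term.
Qed.

Section Rigid.
Hypothesis rigid : sigma_rigid sigma.

Lemma reduced_of_rigid : reduced_ring R.
Proof. by move=> a aa; apply: (rigid (alpha := ezero n)); rewrite sigma_pow0. Qed.

Lemma mul_sigma_pow_eq0 (a b : R) m : a * sp m b = 0 <-> a * b = 0.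
Proof.
have [spM _ sp0] := mult_hom_sp m; have red := reduced_of_rigid.
split=> [abm | /(reduced_mul_eq0C red) ba].
  apply: (reduced_mul_eq0C red); apply: (rigid (alpha := m)).
  by rewrite spM mulrA -(mulrA b) abm mulr0 mul0r.
apply: (rigid (alpha := m)).
rewrite spM -mulrA (mulrA (sp m b)) -spM ba.
by rewrite sp0 mul0r mulr0.
Qed.

Lemma sigma_idem i e : idempotent_el e -> sigma i e = e.
Proof.
move=> idem; have e1e : e * (1 - e) = 0 by rewrite mulrBr mulr1 idem subrr.
have ee1 : (1 - e) * e = 0 by rewrite mulrBl mul1r idem subrr.
move: e1e ee1 => /(mul_sigma_pow_eq0 _ _ (eunit i)).2 + /(mul_sigma_pow_eq0 _ _ (eunit i)).2.
rewrite !sigma_pow_eunit sigmaB (sigma_delta1 i).1 mulrBr mulrBl mulr1 mul1r.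
by move=> /eqP; rewrite subr_eq0 => /eqP <- /eqP; rewrite subr_eq0 => /eqP.
Qed.

Hypothesis ab : abelian_ring R.

Lemma delta_idem i e : idempotent_el e -> delta i e = 0.
Proof.
move=> idem; have := (sigma_deltaM i e e).2.
rewrite idem (@sigma_idem i e idem) -(ab idem (delta i e)) => D.
have ed : e * delta i e = 0.
  have := congr1 (GRing.mul e) D; rewrite mulrDr !mulrA idem => E.
  by apply: (addrI (e * delta i e)); rewrite addr0 -E.
by rewrite D ed addr0.
Qed.

Lemma phi_idem_central e : idempotent_el e -> forall z, phi e * z = z * phi e.
Proof.
move=> idem z; have [s [c ->]] := smon_span z.
apply: commr_sum => m _; apply: commrM; first by rewrite /GRing.comm -!rmorphM ab.
apply: commr_prod => i _; apply: commrX.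
by rewrite /GRing.comm x_phi sigma_idem // delta_idem // rmorph0 addr0.
Qed.

Lemma lead_coef_mul_eq0 f h a0 b0 :
  f * h = 0 -> supp_le f a0 -> supp_le h b0 -> coef f a0 * coef h b0 = 0.
Proof.
move=> fh fa0 hb0; have := coef_mul_lead fa0 hb0; rewrite fh coef0 => /esym.
by move=> /(right_unit_mul_eq0 (right_unit_coef_smon_mul a0 b0))/mul_sigma_pow_eq0.
Qed.

Lemma reduced_skew_PBW : reduced_ring A.
Proof.
move=> f ff; apply/eqP; apply: contraT => /exists_supp_le[a0 nz fa0]; case/negP: nz.
exact/eqP/reduced_of_rigid/(lead_coef_mul_eq0 ff fa0 fa0).
Qed.

Lemma coef_mulr_phi_idem f e m : idempotent_el e -> coef (f * phi e) m = coef f m * e.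
Proof. by move=> idem; rewrite -phi_idem_central // coef_phiM ab. Qed.

Lemma coef_mulr_phi_rann_idem f e s m : rann_idem (map (coef f) s) e ->
  (m \in s) || (coef f m == 0) -> coef (f * phi e) m = 0.
Proof.
move=> fe; rewrite coef_mulr_phi_idem; last by case: fe => -[].
by case/orP=> [ms | /eqP ->]; [apply: rann_idem_mul_eq0 fe (map_f _ ms) | rewrite mul0r].
Qed.

Lemma mulr_phi_rann_idem f e : rann_idem (map (coef f) (supp f)) e -> f * phi e = 0.
Proof.
move=> fe; apply: coef_eq0 => m; apply: coef_mulr_phi_rann_idem fe _.
by case: eqP => [_ | /eqP/supp_coef ->]; rewrite ?orbT.
Qed.

Hypothesis pp : right_central_pp R.

(* If [f g = 0] but [h := g - e g] were nonzero, with leading coefficient [b], pick the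
   largest monomial [a0] of [f] whose coefficient does not kill [b], and an idempotent
   [u] killing the coefficients of [f] above [a0] but fixing [b].  The leading coefficient
   of [(f u) h = 0] is a unit multiple of [f_a0 u sigma^a0(b)], so by compatibility
   [f_a0 b = f_a0 u b = 0], contradicting the choice of [a0]. *)
Lemma mul_eq0_phi_rann_idem f g e :
  rann_idem (map (coef f) (supp f)) e -> f * g = 0 -> phi e * g = g.
Proof.
move=> fe fg; have [[idem _] E] := fe; set h := g - phi e * g.
suff /eqP : h = 0 by rewrite subr_eq0 => /eqP <-.
apply/eqP; apply: contraT => /exists_supp_le[b0 nzb hb0]; set b := coef h b0 in nzb.
have eb : e * b = 0 by rewrite /b /h coefB coef_phiM mulrBr mulrA idem subrr.
set l := [seq a <- supp f | coef f a * b != 0].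
have [a0 a0l max_a0] : exists2 a0, a0 \in l & forall a, a \in l -> mle a a0.
  apply: exists_mle_max; apply: contra nzb => /eqP l0; suff <- : e * b = b by rewrite eb.
  apply/E => _ /mapP[a af ->]; apply/eqP; apply: contraT => nz.
  have : a \in l by rewrite mem_filter nz af.
  by rewrite l0.
move: a0l; rewrite mem_filter => /andP[nz0 a0f].
have above a : mlt a0 a -> coef f a * b = 0.
  move=> lt; have [af | naf] := boolP (a \in supp f); last by rewrite /coef (negbTE naf) mul0r.
  apply/eqP; apply: contraT => nz; have := max_a0 a; rewrite mem_filter nz af => /(_ isT).
  by rewrite /mle leNgt -/(mlt a0 a) lt.
have [u fu] := rann_idem_seq pp [seq coef f a | a <- supp f & mlt a0 a].
have [[uidem _] U] := fu.
have ub : u * b = b.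
  by apply/U => y /mapP[a]; rewrite mem_filter => /andP[lt _] ->; apply: above.
have fu_a0 : supp_le (f * phi u) a0.
  move=> a lt; apply: coef_mulr_phi_rann_idem fu _.
  have [af | naf] := boolP (a \in supp f); first by rewrite mem_filter lt af.
  by rewrite /coef (negbTE naf) eqxx orbT.
have fh : f * h = 0 by rewrite /h mulrBr fg mulrA (mulr_phi_rann_idem fe) mul0r subrr.
have fuh : f * phi u * h = 0 by rewrite -mulrA phi_idem_central // mulrA fh mul0r.
have := lead_coef_mul_eq0 fuh fu_a0 hb0; rewrite coef_mulr_phi_idem // -mulrA ub.
by move/eqP; rewrite (negbTE nz0).
Qed.

Lemma right_central_pp_skew_PBW : right_central_pp A.
Proof.
move=> f; have [e fe] := rann_idem_seq pp (map (coef f) (supp f)).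
have [[idem _] _] := fe; exists (phi e); split.
  by split; [rewrite /idempotent_el -rmorphM idem | exact: phi_idem_central].
move=> g; rewrite mul_eq0_seq1; split=> [|<-]; first exact: mul_eq0_phi_rann_idem.
by rewrite mulrA (mulr_phi_rann_idem fe) mul0r.
Qed.

End Rigid.
End SkewPBW.

Theorem mainTheorem3 (R A : pzRingType) (phi : {rmorphism R -> A}) (n : nat)
  (x : 'I_n -> A) (d : 'I_n -> 'I_n -> R)
  (sigma delta : 'I_n -> R -> R) :
  skew_PBW phi x d ->
  (forall (i : 'I_n) (r : R), x i * phi r = phi (sigma i r) * x i + phi (delta i r)) ->
  (forall i : 'I_n, bijective (sigma i)) ->
  (forall i j : 'I_n, (i < j)%N -> invertible_el (d i j)) ->
  sigma_rigid sigma -> abelian_ring R -> NI_ring R ->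
  (right_pp R -> ac_right A) /\ (left_pp R -> ac_left A).
Proof.
move=> PBW x_phi _ d_inv rigid ab _.
have ac_A : right_central_pp R -> ac_right A /\ ac_left A.
  move=> ppR; apply: ac_of_right_central_pp (reduced_skew_PBW PBW x_phi d_inv rigid) _.
  exact: right_central_pp_skew_PBW PBW x_phi d_inv rigid ab ppR.
split=> pp; first exact: (ac_A (right_central_pp_of_right_pp ab pp)).1.
exact: (ac_A (right_central_pp_of_left_pp (reduced_of_rigid rigid) ab pp)).2.
Qed.
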